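(* Let $N=\langle S,T,F,I,R,\mathsf m,\ell\rangle$ be a single execution net. Let $\mathit{Confl}(N)=\{\{t,t'\}\mid t,t'\in T,\ \forall X\in \mathrm{St}(N).\ \{t,t'\}\not\subseteq \lfloor X\rfloor\}$, let $S^{\#}=\{s_A\mid A\in \mathit{Confl}(N)\}$ be a set of fresh places (disjoint from $S\cup T$), and let $$N^{\#}=\langle S\cup S^{\#},\ T,\ F\cup\{(s_A,t)\mid s_A\in S^{\#},\ t\in A\},\ I,\ R,\ \mathsf m + S^{\#},\ \ell\rangle ,$$ i.e. every new place $s_A$ is initially marked with one token, has no incoming arcs, and is in the preset of each transition of $A$. Then $N^{\#}$ is conflict saturated and $N\equiv N^{\#}$.
   Context: A (labelled contextual) Petri net is a tuple $N=\langle S,T,F,I,R,\mathsf m,\ell\rangle$ where $S$ (places) and $T$ (transitions) are disjoint sets, $F\subseteq (S\times T)\cup(T\times S)$ is the flow relation, $I\subseteq S\times T$ are inhibitor arcs, $R\subseteq S\times T$ are read arcs, $\mathsf m$ is a multiset over $S$ (initial marking), and $\ell:T\to L$ is a total labelling function into a set $L$ of labels. For $x\in S\cup T$: ${}^\bullet x=\{y\mid (y,x)\in F\}$, $x^\bullet=\{y\mid (x,y)\in F\}$; for $t\in T$: ${}^\circ t=\{s\mid (s,t)\in I\}$ and $\underline{t}=\{s\mid (s,t)\in R\}$. Every transition has nonempty preset. A transition $t$ is enabled at a marking $m$ if ${}^\bullet t+\underline t\subseteq m$ and $m(s)=0$ for every $s\in {}^\circ t$; its firing yields $m'=m-{}^\bullet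 t+t^\bullet$. A (finite) firing sequence is $\mathsf m=m_0[t_1\rangle m_1[t_2\rangle\cdots[t_n\rangle m_n$ where each $t_{i+1}$ is enabled at $m_i$ and its firing yields $m_{i+1}$. A state of $N$ is the multiset $t_1+\dots+t_n$ of the transitions fired in such a finite firing sequence starting at the initial marking; $\mathrm{St}(N)$ is the set of states. For a multiset $X$, $\lfloor X\rfloor$ is its support (the set of elements with nonzero multiplicity). $N$ is a single execution net if every state is a set ($X=\lfloor X\rfloor$). $N$ is conflict saturated if for all $t,t'\in T$ such that $\{t,t'\}\not\subseteq\lfloor X\rfloor$ for every $X\in\mathrm{St}(N)$, one has ${}^\bullet t\cap{}^\bullet t'\neq\emptyset$. Two nets $N,N'$ are equivalent, $N\equiv N'$, if they have the same set of transitions, the same labelling and $\mathrm{St}(N)=\mathrm{St}(N')$. *)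

From mathcomp Require Import all_boot.
From mathcomp Require Import finmap.
Set Implicit Arguments. Unset Strict Implicit. Unset Printing Implicit Defensive.
Local Open Scope fset_scope.

(* The flow relation F is split into its S x T part (pre) and
   its T x S part (post); inh = inhibitor arcs I, rd = read arcs R,
   m0 = initial marking (a multiset over S), lab = labelling. *)
Record net (L S : Type) (T : choiceType) := Net {
  pre  : S -> T -> bool;
  post : T -> S -> bool;
  inh  : S -> T -> bool;
  rd   : S -> T -> bool;
  m0   : S -> nat;
  lab  : T -> L
}.

Section Semantics.
Variables (L S : Type) (T : choiceType) (N : net L S T).

Definition nonempty_presets : Prop := forall t : T, exists s : S, pre N s t.

Definition enabled (m : S -> nat) (t : T) : Prop :=
  (forall s, pre N s t + rd N s t <= m s)%N /\ (forall s, inh N s t -> m s = 0).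

Definition fire (m : S -> nat) (t : T) : S -> nat :=
  fun s => (m s - pre N s t + post N t s)%N.

Fixpoint fires (m : S -> nat) (l : seq T) : Prop :=
  match l with
  | [::] => True
  | t :: l' => enabled m t /\ fires (fire m t) l'
  end.

Definition isState (X : T -> nat) : Prop :=
  exists l : seq T, fires (m0 N) l /\ forall t, X t = count_mem t l.

Definition single_execution : Prop :=
  forall X, isState X -> forall t, (X t <= 1)%N.

Definition in_conflict (t t' : T) : Prop :=
  forall X, isState X -> ~ ((0 < X t)%N /\ (0 < X t')%N).

Definition conflict_saturated : Prop :=
  forall t t' : T, in_conflict t t' -> exists s : S, pre N s t && pre N s t'.

Definition confl_place : Type :=
  {A : {fset T} | exists t t' : T, A = [fset t; t'] /\ in_conflict t t'}.

Definition sharp : net L (S + confl_place) T :=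
  @Net L (S + confl_place) T
    (fun p t => match p with inl s => pre N s t | inr A => t \in sval A end)
    (fun t p => match p with inl s => post N t s | inr _ => false end)
    (fun p t => match p with inl s => inh N s t | inr _ => false end)
    (fun p t => match p with inl s => rd N s t | inr _ => false end)
    (fun p => match p with inl s => m0 N s | inr _ => 1 end)
    (lab N).

End Semantics.

Definition net_equiv (L S S' : Type) (T : choiceType)
    (N : net L S T) (N' : net L S' T) : Prop :=
  (forall t, lab N t = lab N' t) /\ (forall X, isState N X <-> isState N' X).

From mathcomp Require Import all_boot.
From mathcomp Require Import finmap.
Set Implicit Arguments. Unset Strict Implicit. Unset Printing Implicit Defensive.
Local Open Scope fset_scope.

(* The places of N^# over S behave exactly as in N, so every
   firing sequence of N^# is one of N (forgetting the new places).
   Conversely, after firing a prefix p of a firing sequence of N, the place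
   s_A of N^# holds one token if no transition of A occurs in p and none
   otherwise.  The only new requirement for firing t in N^# is a token on
   s_A for every conflict pair A containing t; this holds because in a single
   execution net a conflict pair {a, b} contributes at most one occurrence to
   any firing sequence (a, b occur at most once each and never together).
   Hence N and N^# have the same firing sequences, so the same states.
   Conflict saturation of N^# follows: a pair in conflict in N^# is in
   conflict in N, so its fresh place s_{t,t'} lies in both presets. *)

Section Firing.
Variables (L S : Type) (T : choiceType) (N : net L S T).

Lemma fires_ext (m m' : S -> nat) (l : seq T) :
  m =1 m' -> fires N m l -> fires N m' l.
Proof.
elim: l m m' => [//|t l IHl] m m' Em /= [[Hpre Hinh] Hl]; split.
  by split=> s; rewrite -Em //; apply: Hinh.
by apply: IHl Hl => s; rewrite /fire Em.
Qed.

Lemma fires_cat (m : S -> nat) (p q : seq T) :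
  fires N m (p ++ q) <-> fires N m p /\ fires N (foldl (fire N) m p) q.
Proof.
elim: p m => [|t p IHp] m /=; first by split=> // [[]].
by rewrite IHp; split=> [[? []]|[[? ?] ?]].
Qed.

Lemma firing_state (l : seq T) :
  fires N (m0 N) l -> isState N (fun t => count_mem t l).
Proof. by move=> Hl; exists l. Qed.

Lemma conflict_pair_fires_once (a b : T) (l : seq T) :
  single_execution N -> in_conflict N a b -> fires N (m0 N) l ->
  (count (mem [fset a; b]) l <= 1)%N.
Proof.
move=> Hse Hab /firing_state Hst.
have /eq_count -> : mem [fset a; b] =1 predU (pred1 a) (pred1 b).
  by move=> x; rewrite /= !inE.
have [<-|neq_ab] := eqVneq a b.
  rewrite (@eq_count _ _ (pred1 a)); first exact: (Hse _ Hst a).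
  by move=> x; rewrite /= orbb.
have disjoint_ab : count (predI (pred1 a) (pred1 b)) l = 0.
  rewrite (@eq_count _ _ pred0) ?count_pred0 // => x /=.
  by apply/negbTE/andP=> [[/eqP-> /eqP Eab]]; rewrite Eab eqxx in neq_ab.
rewrite -[X in (X <= _)%N]addn0 -{1}disjoint_ab count_predUI /=.
have [->|pos_a] := posnP (count_mem a l); first exact: (Hse _ Hst b).
have [->|pos_b] := posnP (count_mem b l); first by rewrite addn0 (Hse _ Hst a).
by case: (Hab _ Hst).
Qed.

End Firing.

Section Sharp.
Variables (L S : Type) (T : choiceType) (N : net L S T).

Lemma sharp_fires_fires (M : S + confl_place N -> nat) (l : seq T) :
  fires (sharp N) M l -> fires N (fun s => M (inl s)) l.
Proof.
elim: l M => [//|t l IHl] M /= [[Hpre Hinh] Hl]; split.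
  by split=> s; [apply: (Hpre (inl s)) | apply: (Hinh (inl s))].
exact: (IHl (fire (sharp N) M t)).
Qed.

Definition sharp_marking (m : S -> nat) (p : seq T) :
    S + confl_place N -> nat :=
  fun x => match x with
           | inl s => m s
           | inr A => ~~ has (mem (sval A)) p
           end.

Hypothesis single : single_execution N.

Lemma fires_sharp_suffix (p l : seq T) :
  fires N (m0 N) (p ++ l) ->
  fires (sharp N) (sharp_marking (foldl (fire N) (m0 N) p) p) l.
Proof.
elim: l p => [//|t l IHl] p Hpl.
have [Hp /= [[Hpre Hinh] _]] := (fires_cat N _ _ _).1 Hpl.
have Hpt : fires N (m0 N) (rcons p t).
  by rewrite -cats1; apply/fires_cat; split=> //=; split=> //; split.
split.
  split=> [[s|A]|[s|[]]] //=; last exact: Hinh.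
  case HtA: (t \in sval A); rewrite ?addn0 //.
  have [a [b [EA Hab]]] := svalP A.
  have := conflict_pair_fires_once single Hab Hpt.
  by rewrite -EA -cats1 count_cat /= HtA addn0 addn1 ltnS leqn0 has_count; case: count.
apply: fires_ext (IHl (rcons p t) _); last by rewrite cat_rcons.
case=> [s|A]; first by rewrite foldl_rcons.
rewrite /= /fire /= has_rcons addn0 orbC.
by case: has; rewrite ?sub0n //=; case: (t \in sval A).
Qed.

Lemma sharp_states X : isState N X <-> isState (sharp N) X.
Proof.
split=> [[l [Hl HX]]|[l [Hl HX]]]; exists l; split=> //.
  by apply: fires_ext (fires_sharp_suffix (p := [::]) Hl); case.
exact: (sharp_fires_fires Hl).
Qed.

End Sharp.

Definition conflict_place (L S : Type) (T : choiceType) (N : net L S T)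
    (t t' : T) (Htt' : in_conflict N t t') : confl_place N :=
  exist _ [fset t; t'] (ex_intro _ t (ex_intro _ t' (conj erefl Htt'))).

Theorem mainTheorem1 (L S : Type) (T : choiceType) (N : net L S T) :
  nonempty_presets N -> single_execution N ->
  conflict_saturated (sharp N) /\ net_equiv N (sharp N).
Proof.
move=> _ single; split; last by split=> // X; apply: sharp_states.
move=> t t' Hsharp.
have Htt' : in_conflict N t t'.
  by move=> X /(sharp_states single) /Hsharp.
by exists (inr (conflict_place Htt')); rewrite /= fset21 fset22.
Qed.
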